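(* Let $\alpha\in(1,2)$ and let $p\ge2$ be an integer (so $p>\alpha$). Then $f^{p,\alpha}(\theta)=f^{p,\alpha}(-\theta)$ for all $\theta$, and there is a constant $C_{p,\alpha}$ depending only on $p$ and $\alpha$ such that for all $\theta\in[0,\pi]$ $$|\theta|^\alpha\left(\frac{\sin(\theta/2)}{\theta/2}\right)^{p+1}\le f^{p,\alpha}(\theta)\le |\theta|^\alpha\left(\frac{\sin(\theta/2)}{\theta/2}\right)^{p+1}+C_{p,\alpha}\left(\sin(\theta/2)\right)^{p+1}.$$ Moreover, $$\frac{f^{p,\alpha}(\pi)}{\max_\theta f^{p,\alpha}(\theta)}\le\frac{f^{p,\alpha}(\pi)}{f^{p,\alpha}(\pi/2)}\le 2^{\frac{2\alpha+1-p}{2}}.$$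
   Context: For real $\alpha$ and integer $p\ge 2$, $f^{p,\alpha}(\theta)=\sum_{l\in\mathbb Z}|\theta+2l\pi|^{\alpha}\left(\frac{\sin(\theta/2+l\pi)}{\theta/2+l\pi}\right)^{p+1}$ (with the value at $\theta/2+l\pi=0$ of $\frac{\sin x}{x}$ taken as $1$). *)

From Stdlib Require Import Reals Lra.
From Coquelicot Require Import Coquelicot.
Open Scope R_scope.

(* |x|^a for real a, with the convention 0^a = 0 (relevant for a > 0). *)
Definition rabs_pow (x a : R) : R :=
  if Req_EM_T x 0 then 0 else Rpower (Rabs x) a.

Definition sinc (x : R) : R :=
  if Req_EM_T x 0 then 1 else sin x / x.

Definition f_term (p : nat) (alpha theta : R) (l : Z) : R :=
  rabs_pow (theta + 2 * IZR l * PI) alpha *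
  (sinc (theta / 2 + IZR l * PI)) ^ (p + 1).

Definition f_pa (p : nat) (alpha theta : R) : R :=
  Series (fun n : nat => f_term p alpha theta (Z.of_nat n)) +
  Series (fun n : nat => f_term p alpha theta (- Z.of_nat (S n))%Z).

From Stdlib Require Import Reals Lra Lia.
From Coquelicot Require Import Coquelicot.
Open Scope R_scope.

(* Write [f^{p,alpha}(theta) = sum_l g(theta + 2 l pi)] with the central term
   [g(x) = |x|^alpha (sin(x/2)/(x/2))^(p+1)].  For [x > 0] one has
   [g(x) = (2 sin(x/2))^(p+1) x^beta] with [beta = alpha - p - 1 < -1], and at the lattice
   points the sine factor is [+- sin(theta/2)].  Hence the series converges absolutely,
   and every term but [l = 0] carries the factor [(2 sin(theta/2))^(p+1)] times a signed
   lattice sum [W(x) = sum_n tau^n (x + 2 n pi)^beta], [tau = (-1)^(p+1)]. *)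

(** * Real powers [x |-> x^r] with a negative exponent *)

Lemma Rpower_gt_0 (x r : R) : 0 < Rpower x r.
Proof. apply exp_pos. Qed.

Lemma Rpower_antitone (a b r : R) : 0 < a -> a <= b -> r <= 0 -> Rpower b r <= Rpower a r.
Proof.
  intros Ha Hab Hr. unfold Rpower.
  assert (ln a <= ln b) by (apply ln_le; lra).
  destruct (Req_dec (r * ln b) (r * ln a)) as [E|E]; [rewrite E; lra|].
  left. apply exp_increasing. nra.
Qed.

(* Tangent-line inequality: for [r <= 0] the function [x |-> x^r] is convex, so
   its graph lies above its tangent at [b]. *)
Lemma Rpower_tangent (r b x : R) : r <= 0 -> 0 < b -> 0 < x ->
  Rpower b r + r * Rpower b (r - 1) * (x - b) <= Rpower x r.
Proof.
  intros Hr Hb Hx.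
  set (E := Rpower b r).
  assert (Hderiv : Rpower b (r - 1) = E / b).
  { unfold E, Rpower. replace ((r - 1) * ln b) with (r * ln b + - ln b) by ring.
    rewrite exp_plus, exp_Ropp, exp_ln by lra. reflexivity. }
  assert (Hratio : Rpower x r = E * exp (r * ln (x / b))).
  { unfold E, Rpower. rewrite ln_div, <- exp_plus by lra. f_equal. ring. }
  assert (Hxb : 0 < x / b) by (apply Rdiv_lt_0_compat; lra).
  assert (Hln : ln (x / b) <= x / b - 1).
  { pose proof (exp_ineq1_le (ln (x / b))) as H. rewrite exp_ln in H; lra. }
  pose proof (exp_ineq1_le (r * ln (x / b))) as Hexp.
  assert (HE : 0 < E) by apply Rpower_gt_0.
  rewrite Hderiv, Hratio.
  replace (E + r * (E / b) * (x - b)) with (E * (1 + r * (x / b - 1))) by (field; lra).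
  apply Rmult_le_compat_l; nra.
Qed.

(* Increasing differences of the convex function [x |-> x^r], [r <= 0]: an increment
   of length [h] is larger the further to the right it is taken. *)
Lemma Rpower_increments (r a b h : R) : r <= 0 -> 0 < a -> 0 <= h -> a + h <= b ->
  Rpower (a + h) r - Rpower a r <= Rpower (b + h) r - Rpower b r.
Proof.
  intros Hr Ha Hh Hab.
  pose proof (Rpower_tangent r (a + h) a Hr ltac:(lra) Ha) as Tleft.
  pose proof (Rpower_tangent r b (b + h) Hr ltac:(lra) ltac:(lra)) as Tright.
  assert (Hslope : Rpower b (r - 1) <= Rpower (a + h) (r - 1))
    by (apply Rpower_antitone; lra).
  replace (a - (a + h)) with (- h) in Tleft by ring.
  replace (b + h - b) with h in Tright by ring.
  assert (Hrh : r * h <= 0) by nra.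
  assert (Hprod : r * h * (Rpower (a + h) (r - 1) - Rpower b (r - 1)) <= 0) by nra.
  nra.
Qed.

(* Convergence of the series [sum (n+1)^r] for [r < -1], by comparison with the
   telescoping series [((n+1)^(r+1) - (n+2)^(r+1)) / (-(r+1))]. *)
Lemma ex_series_Rpower (r : R) : r < -1 -> ex_series (fun n => Rpower (INR n + 1) r).
Proof.
  intros Hr. set (g := - (r + 1)). assert (Hg : 0 < g) by (unfold g; lra).
  set (a := fun n => Rpower (INR n + 1) r).
  assert (Hstep : forall n,
    a (S n) <= (Rpower (INR n + 1) (r + 1) - Rpower (INR n + 2) (r + 1)) / g).
  { intros n. unfold a. rewrite S_INR. pose proof (pos_INR n).
    pose proof (Rpower_tangent (r + 1) (INR n + 2) (INR n + 1)
                  ltac:(lra) ltac:(lra) ltac:(lra)) as T.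
    replace (r + 1 - 1) with r in T by ring.
    replace (INR n + 1 + 1) with (INR n + 2) by ring.
    apply Rmult_le_reg_r with g; [lra|]. unfold Rdiv.
    rewrite Rmult_assoc, Rinv_l by lra. unfold g. nra. }
  assert (Hbound : forall N, sum_n a N <= 1 + (1 - Rpower (INR N + 1) (r + 1)) / g).
  { induction N as [|N IH].
    - rewrite sum_O. unfold a. simpl. replace (0 + 1) with 1 by ring.
      unfold Rpower. rewrite ln_1, !Rmult_0_r, exp_0. lra.
    - rewrite sum_Sn. change (plus (sum_n a N) (a (S N))) with (sum_n a N + a (S N)).
      pose proof (Hstep N). rewrite S_INR. replace (INR N + 1 + 1) with (INR N + 2) by ring.
      unfold Rdiv in *. lra. }
  assert (Hincr : forall n, sum_n a n <= sum_n a (S n)).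
  { intros n. rewrite sum_Sn. change (plus (sum_n a n) (a (S n))) with (sum_n a n + a (S n)).
    pose proof (Rpower_gt_0 (INR (S n) + 1) r). unfold a. lra. }
  destruct (ex_finite_lim_seq_incr (sum_n a) (1 + 1 / g) Hincr) as [l Hl].
  { intros n. pose proof (Hbound n). pose proof (Rpower_gt_0 (INR n + 1) (r + 1)).
    assert (0 < / g) by (apply Rinv_0_lt_compat; lra). unfold Rdiv in *. nra. }
  exists l. exact Hl.
Qed.

Lemma is_series_pairs (a : nat -> R) (l : R) : is_series a l ->
  is_series (fun m => a (2 * m)%nat + a (2 * m + 1)%nat) l.
Proof.
  intros Ha.
  assert (Hpartial : forall m,
    sum_n (fun m => a (2 * m)%nat + a (2 * m + 1)%nat) m = sum_n a (S (2 * m))).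
  { induction m as [|m IH].
    - rewrite !sum_Sn, !sum_O. reflexivity.
    - rewrite sum_Sn, IH.
      replace (S (2 * S m)) with (S (S (S (2 * m)))) by lia.
      replace (2 * S m)%nat with (S (S (2 * m))) by lia.
      replace (S (S (2 * m)) + 1)%nat with (S (S (S (2 * m)))) by lia.
      rewrite !sum_Sn. unfold plus; simpl. ring. }
  unfold is_series. eapply filterlim_ext; [intros m; symmetry; apply Hpartial|].
  apply (is_lim_seq_subseq (sum_n a) l (fun m => S (2 * m))); [|exact Ha].
  apply eventually_subseq; intros; lia.
Qed.

Lemma Series_pairs (a : nat -> R) : ex_series a ->
  ex_series (fun m => a (2 * m)%nat + a (2 * m + 1)%nat) /\
  Series a = Series (fun m => a (2 * m)%nat + a (2 * m + 1)%nat).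
Proof.
  intros Ha. pose proof (is_series_pairs a _ (Series_correct a Ha)) as Hp.
  split; [eexists; exact Hp | symmetry; apply is_series_unique; exact Hp].
Qed.

Lemma Series_nonneg_pairs (a : nat -> R) : ex_series a ->
  (forall m, 0 <= a (2 * m)%nat + a (2 * m + 1)%nat) -> 0 <= Series a.
Proof.
  intros Ha Hpos. destruct (Series_pairs a Ha) as [Hex ->].
  assert (Hzero : Series (fun _ : nat => 0) = 0).
  { rewrite (Series_ext _ (fun _ : nat => 0 * 1)) by (intros; ring).
    rewrite Series_scal_l. ring. }
  rewrite <- Hzero. apply Series_le; [|exact Hex].
  intros m. split; [lra | apply Hpos].
Qed.

Lemma ex_series_dominated (a M : nat -> R) :
  (forall n, Rabs (a n) <= M n) -> ex_series M -> ex_series a.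
Proof. exact (ex_series_le a M). Qed.

Lemma Series_tail_le (a M : nat -> R) (n : nat) :
  (forall k, Rabs (a k) <= M k) -> ex_series M ->
  Rabs (Series a - sum_f_R0 a n) <= Series M - sum_f_R0 M n.
Proof.
  intros Hle HM.
  assert (Ha : ex_series a) by exact (ex_series_dominated a M Hle HM).
  rewrite (Series_incr_n a (S n)), (Series_incr_n M (S n)) by (lia || assumption).
  simpl pred.
  replace (sum_f_R0 a n + Series (fun k => a (S n + k)%nat) - sum_f_R0 a n)
    with (Series (fun k => a (S n + k)%nat)) by ring.
  replace (sum_f_R0 M n + Series (fun k => M (S n + k)%nat) - sum_f_R0 M n)
    with (Series (fun k => M (S n + k)%nat)) by ring.
  assert (HMt : ex_series (fun k => M (S n + k)%nat)) by (apply ex_series_incr_n; exact HM).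
  eapply Rle_trans; [apply Series_Rabs|].
  - apply (ex_series_dominated _ (fun k => M (S n + k)%nat)); [|exact HMt].
    intros k. rewrite Rabs_Rabsolu. apply Hle.
  - apply Series_le; [|exact HMt]. intros k. split; [apply Rabs_pos | apply Hle].
Qed.

Lemma continuous_Series (fn : nat -> R -> R) (M : nat -> R) (c : R) (r : posreal) :
  (forall n y, Boule c r y -> Rabs (fn n y) <= M n) -> ex_series M ->
  (forall n y, Boule c r y -> continuity_pt (fn n) y) ->
  forall y, Boule c r y -> continuity_pt (fun y => Series (fun n => fn n y)) y.
Proof.
  intros Hbound HM Hcont.
  apply (CVU_continuity (fun n y => sum_f_R0 (fun k => fn k y) n)).
  - intros eps Heps.
    destruct (proj1 (is_series_Reals M _) (Series_correct M HM) eps Heps) as [N HN].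
    exists N. intros n y Hn Hy.
    eapply Rle_lt_trans; [apply (Series_tail_le _ M); [intros k; apply Hbound, Hy | exact HM]|].
    specialize (HN n Hn). unfold R_dist in HN. rewrite Rabs_minus_sym in HN.
    eapply Rle_lt_trans; [apply Rle_abs | exact HN].
  - intros n y Hy. induction n as [|n IH]; simpl.
    + apply Hcont, Hy.
    + apply (continuity_pt_plus (fun y => sum_f_R0 (fun k => fn k y) n) (fn (S n))); auto.
Qed.

Lemma continuity_pt_ex_derive (f : R -> R) (x : R) : ex_derive f x -> continuity_pt f x.
Proof.
  intros H. apply continuity_pt_filterlim.
  exact (@ex_derive_continuous R_AbsRing R_NormedModule f x H).
Qed.

Section Signs.
Variable tau : R.
Hypothesis Htau : tau = 1 \/ tau = -1.

Lemma sign_pow_abs (n : nat) : Rabs (tau ^ n) = 1.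
Proof.
  rewrite <- RPow_abs. replace (Rabs tau) with 1; [apply pow1|].
  destruct Htau as [-> | ->]; [rewrite Rabs_R1 | rewrite Rabs_left by lra]; ring.
Qed.

Lemma sign_pow_even (m : nat) : tau ^ (2 * m) = 1.
Proof. destruct Htau as [-> | ->]; [apply pow1 | apply pow_1_even]. Qed.

Lemma sign_pow_odd (m : nat) : tau ^ (2 * m + 1) = tau.
Proof. rewrite pow_add, sign_pow_even. ring. Qed.

(* For a nonnegative nonincreasing summable [c], the signed series of [c] is at most
   the signed series of the consecutive pairs [c (2n) + c (2n+1)]: for [tau = 1] both
   are [sum c], for [tau = -1] the difference groups into [2 (c (4m+1) - c (4m+2)) >= 0]. *)
Lemma signed_series_pairs_le (c : nat -> R) :
  (forall k, 0 <= c k) -> (forall k, c (S k) <= c k) -> ex_series c ->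
  Series (fun k => tau ^ k * c k) <=
  Series (fun n => tau ^ n * (c (2 * n)%nat + c (2 * n + 1)%nat)).
Proof.
  intros Hpos Hdecr Hc.
  destruct (Series_pairs c Hc) as [Hcp _].
  assert (Hsigned : ex_series (fun k => tau ^ k * c k)).
  { apply (ex_series_dominated _ c); [|exact Hc]. intros k.
    rewrite Rabs_mult, sign_pow_abs, Rabs_pos_eq by apply Hpos. lra. }
  assert (Hright : ex_series (fun n => tau ^ n * (c (2 * n)%nat + c (2 * n + 1)%nat))).
  { apply (ex_series_dominated _ (fun n => c (2 * n)%nat + c (2 * n + 1)%nat)); [|exact Hcp].
    intros n.
    rewrite Rabs_mult, sign_pow_abs, Rabs_pos_eq by (pose proof (Hpos (2 * n)%nat);
      pose proof (Hpos (2 * n + 1)%nat); lra). lra. }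
  destruct (Series_pairs _ Hsigned) as [Hleft ->].
  assert (Hgroup : forall m, tau ^ (2 * m) * c (2 * m)%nat + tau ^ (2 * m + 1) * c (2 * m + 1)%nat
                             = c (2 * m)%nat + tau * c (2 * m + 1)%nat)
    by (intros m; rewrite sign_pow_even, sign_pow_odd; ring).
  rewrite (Series_ext _ _ Hgroup). apply (ex_series_ext _ _ Hgroup) in Hleft.
  cut (0 <= Series (fun n => tau ^ n * (c (2 * n)%nat + c (2 * n + 1)%nat)) -
           Series (fun m => c (2 * m)%nat + tau * c (2 * m + 1)%nat)); [lra|].
  rewrite <- Series_minus by assumption.
  apply Series_nonneg_pairs.
  { apply (@ex_series_minus R_AbsRing R_NormedModule); assumption. }
  intros m. rewrite sign_pow_even, sign_pow_odd.
  replace (2 * (2 * m + 1))%nat with (S (2 * (2 * m) + 1)) by lia.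
  pose proof (Hdecr (2 * (2 * m) + 1)%nat).
  destruct Htau as [-> | ->]; lra.
Qed.

End Signs.

Lemma PI_gt_3 : 3 < PI.
Proof. pose proof PI2_3_2. lra. Qed.

(** * Signed lattice sums [sum_n tau^n (x + 2 n pi)^r] *)

(* These sums carry the whole tail of [f^{p,alpha}]: for [0 < theta < 2 pi] the terms with
   [l >= 0] sum to a multiple of [lattice_sum theta] and those with [l < 0] to a multiple of
   [lattice_sum (2 pi - theta)]. *)
Definition lattice_sum (r tau x : R) : R :=
  Series (fun n => tau ^ n * Rpower (x + 2 * INR n * PI) r).

Section LatticeSums.
Variables r tau : R.
Hypothesis Hr : r < -1.
Hypothesis Htau : tau = 1 \/ tau = -1.

Lemma lattice_term_bound (x : R) (n : nat) : 1 <= x ->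
  Rabs (tau ^ n * Rpower (x + 2 * INR n * PI) r) <= Rpower (INR n + 1) r.
Proof.
  intros Hx. pose proof PI_gt_3. pose proof (pos_INR n).
  rewrite Rabs_mult, (sign_pow_abs tau Htau), Rmult_1_l, Rabs_pos_eq by (left; apply Rpower_gt_0).
  apply Rpower_antitone; nra.
Qed.

Lemma ex_lattice_sum (x : R) : 1 <= x ->
  ex_series (fun n => tau ^ n * Rpower (x + 2 * INR n * PI) r).
Proof.
  intros Hx. apply (ex_series_dominated _ (fun n => Rpower (INR n + 1) r)).
  - intros n. apply lattice_term_bound, Hx.
  - apply ex_series_Rpower, Hr.
Qed.

Lemma lattice_sum_bound (x : R) : 1 <= x ->
  Rabs (lattice_sum r tau x) <= Series (fun n => Rpower (INR n + 1) r).
Proof.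
  intros Hx. pose proof (ex_series_Rpower r Hr) as Hzeta.
  eapply Rle_trans; [apply Series_Rabs|].
  - apply (ex_series_dominated _ (fun n => Rpower (INR n + 1) r)); [|exact Hzeta].
    intros n. rewrite Rabs_Rabsolu. apply lattice_term_bound, Hx.
  - apply Series_le; [|exact Hzeta]. intros n.
    split; [apply Rabs_pos | apply lattice_term_bound, Hx].
Qed.

(* On the ball of radius [x - 1] around [x > 1] the series is dominated by
   [sum (n+1)^r], so the M-test gives continuity. *)
Lemma lattice_sum_continuous (x : R) : 1 < x -> continuity_pt (lattice_sum r tau) x.
Proof.
  intros Hx. pose proof PI_gt_3.
  assert (Hrad : 0 < x - 1) by lra. set (rad := mkposreal _ Hrad).
  assert (Hball : forall y, Boule x rad y -> 1 < y).
  { intros y Hy. unfold Boule in Hy. simpl in Hy. apply Rabs_def2 in Hy. lra. }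
  apply (continuous_Series (fun n y => tau ^ n * Rpower (y + 2 * INR n * PI) r)
           (fun n => Rpower (INR n + 1) r) x rad).
  - intros n y Hy. apply lattice_term_bound. left; apply Hball, Hy.
  - apply ex_series_Rpower, Hr.
  - intros n y Hy. pose proof (Hball y Hy). pose proof (pos_INR n).
    apply continuity_pt_ex_derive. unfold Rpower. auto_derive. nra.
  - unfold Boule. rewrite Rminus_eq_0, Rabs_R0. apply cond_pos.
Qed.

(* Positivity of the two-sided tail near [theta in [0, pi]]: grouping consecutive terms,
   the case [tau = -1] reduces to the increasing differences of [x |-> x^r]. *)
Lemma lattice_tail_nonneg (theta : R) : 0 <= theta <= PI ->
  0 <= tau * lattice_sum r tau (2 * PI + theta) + lattice_sum r tau (2 * PI - theta).
Proof.
  intros Hth. pose proof PI_gt_3.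
  unfold lattice_sum. rewrite <- Series_scal_l, <- Series_plus.
  2: { apply (@ex_series_scal_l R_AbsRing R_NormedModule), ex_lattice_sum. lra. }
  2: { apply ex_lattice_sum. lra. }
  apply Series_nonneg_pairs.
  { apply (@ex_series_plus R_AbsRing R_NormedModule).
    - apply (@ex_series_scal_l R_AbsRing R_NormedModule), ex_lattice_sum. lra.
    - apply ex_lattice_sum. lra. }
  intros m. rewrite (sign_pow_even tau Htau), (sign_pow_odd tau Htau).
  set (s := 2 * PI + 2 * INR (2 * m) * PI).
  assert (Hs : 2 * PI <= s) by (unfold s; pose proof (pos_INR (2 * m)); nra).
  replace (2 * INR (2 * m + 1) * PI) with (2 * INR (2 * m) * PI + 2 * PI)
    by (rewrite plus_INR; simpl; ring).
  replace (2 * PI + theta + 2 * INR (2 * m) * PI) with ((s - theta) + 2 * theta)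
    by (unfold s; ring).
  replace (2 * PI - theta + 2 * INR (2 * m) * PI) with (s - theta) by (unfold s; ring).
  replace (2 * PI + theta + (2 * INR (2 * m) * PI + 2 * PI))
    with ((s + 2 * PI - theta) + 2 * theta) by (unfold s; ring).
  replace (2 * PI - theta + (2 * INR (2 * m) * PI + 2 * PI)) with (s + 2 * PI - theta)
    by (unfold s; ring).
  pose proof (Rpower_increments r (s - theta) (s + 2 * PI - theta) (2 * theta)
                ltac:(lra) ltac:(lra) ltac:(lra) ltac:(lra)) as Hincr.
  pose proof (Rpower_gt_0 (s - theta + 2 * theta) r). pose proof (Rpower_gt_0 (s - theta) r).
  pose proof (Rpower_gt_0 (s + 2 * PI - theta + 2 * theta) r).
  pose proof (Rpower_gt_0 (s + 2 * PI - theta) r).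
  destruct Htau as [-> | ->]; lra.
Qed.

Lemma lattice_sum_scale (s u v : R) : 0 < s -> 0 < u -> 0 <= v -> s * v = 2 * PI ->
  lattice_sum r tau (s * u) = Rpower s r * Series (fun n => tau ^ n * Rpower (u + INR n * v) r).
Proof.
  intros Hs Hu Hv Hsv. unfold lattice_sum. rewrite <- Series_scal_l. apply Series_ext. intros n.
  pose proof (pos_INR n).
  replace (s * u + 2 * INR n * PI) with (s * (u + INR n * v))
    by (replace (2 * INR n * PI) with (INR n * (2 * PI)) by ring; rewrite <- Hsv; ring).
  rewrite <- Rpower_mult_distr by nra. ring.
Qed.

(* Comparison of the lattice sums at the half-period and quarter-periods: with
   [c k = (1 + 2k)^r] one has [W(pi) = pi^r sum tau^k c k] and
   [W(pi/2) + W(3pi/2) = (pi/2)^r sum tau^n (c (2n) + c (2n+1))]. *)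
Lemma lattice_sum_half_period :
  lattice_sum r tau PI <=
  Rpower 2 r * (lattice_sum r tau (PI / 2) + lattice_sum r tau (3 * PI / 2)).
Proof.
  pose proof PI_gt_3.
  set (c := fun k : nat => Rpower (1 + INR k * 2) r).
  assert (Hcpos : forall k, 0 <= c k) by (intros k; left; apply Rpower_gt_0).
  assert (Hquarter : forall u, 1 <= u -> ex_series (fun n => tau ^ n * Rpower (u + INR n * 4) r)).
  { intros u Hu. apply (ex_series_dominated _ (fun n => Rpower (INR n + 1) r));
      [|apply ex_series_Rpower, Hr].
    intros n. pose proof (pos_INR n).
    rewrite Rabs_mult, (sign_pow_abs tau Htau), Rmult_1_l, Rabs_pos_eq
      by (left; apply Rpower_gt_0).
    apply Rpower_antitone; lra. }
  assert (Hc : ex_series c).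
  { apply (ex_series_dominated _ (fun n => Rpower (INR n + 1) r)); [|apply ex_series_Rpower, Hr].
    intros n. rewrite Rabs_pos_eq by apply Hcpos.
    pose proof (pos_INR n). apply Rpower_antitone; lra. }
  replace (lattice_sum r tau PI) with (lattice_sum r tau (PI * 1)) by (f_equal; ring).
  replace (lattice_sum r tau (PI / 2)) with (lattice_sum r tau (PI / 2 * 1)) by (f_equal; ring).
  replace (lattice_sum r tau (3 * PI / 2)) with (lattice_sum r tau (PI / 2 * 3))
    by (f_equal; field).
  rewrite (lattice_sum_scale PI 1 2), !(lattice_sum_scale (PI / 2) _ 4) by lra.
  rewrite <- Rmult_plus_distr_l, <- Series_plus.
  2-3: apply Hquarter; lra.
  replace (Rpower PI r) with (Rpower 2 r * Rpower (PI / 2) r)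
    by (rewrite Rpower_mult_distr by lra; f_equal; field).
  rewrite Rmult_assoc. apply Rmult_le_compat_l; [left; apply Rpower_gt_0|].
  apply Rmult_le_compat_l; [left; apply Rpower_gt_0|].
  rewrite (Series_ext
             (fun n => tau ^ n * Rpower (1 + INR n * 4) r + tau ^ n * Rpower (3 + INR n * 4) r)
             (fun n => tau ^ n * (c (2 * n)%nat + c (2 * n + 1)%nat))).
  2: { intros n. unfold c.
       replace (1 + INR (2 * n) * 2) with (1 + INR n * 4) by (rewrite mult_INR; simpl; ring).
       replace (1 + INR (2 * n + 1) * 2) with (3 + INR n * 4)
         by (rewrite plus_INR, mult_INR; simpl; ring).
       ring. }
  rewrite (Series_ext (fun n => tau ^ n * Rpower (1 + INR n * 2) r) (fun k => tau ^ k * c k))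
    by reflexivity.
  apply (signed_series_pairs_le tau Htau c Hcpos); [|exact Hc].
  intros k. unfold c. rewrite S_INR. apply Rpower_antitone; pose proof (pos_INR k); lra.
Qed.

End LatticeSums.

(** * Doubly infinite series *)

Definition zseries (a : Z -> R) : R :=
  Series (fun n => a (Z.of_nat n)) + Series (fun n => a (- Z.of_nat (S n))%Z).

Definition ex_zseries (a : Z -> R) : Prop :=
  ex_series (fun n => a (Z.of_nat n)) /\ ex_series (fun n => a (- Z.of_nat (S n))%Z).

Lemma zseries_ext (a b : Z -> R) : (forall l, a l = b l) -> zseries a = zseries b.
Proof.
  intros H. unfold zseries.
  rewrite (Series_ext _ _ (fun n => H _)), (Series_ext _ _ (fun n => H _)). reflexivity.
Qed.

Section ZSeries.
Variable a : Z -> R.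
Hypothesis Ha : ex_zseries a.

Lemma zseries_nonneg_split :
  Series (fun n => a (Z.of_nat n)) = a 0%Z + Series (fun n => a (Z.of_nat (S n))).
Proof. apply Series_incr_1, Ha. Qed.

Lemma zseries_nonpos_split :
  Series (fun n => a (- Z.of_nat n)%Z) = a 0%Z + Series (fun n => a (- Z.of_nat (S n))%Z).
Proof. apply Series_incr_1, ex_series_incr_1, Ha. Qed.

Lemma zseries_reflect : zseries (fun l => a (- l)%Z) = zseries a.
Proof.
  unfold zseries. rewrite zseries_nonpos_split, zseries_nonneg_split.
  rewrite (Series_ext (fun n => a (- - Z.of_nat (S n))%Z) (fun n => a (Z.of_nat (S n))))
    by (intros; rewrite Z.opp_involutive; reflexivity).
  ring.
Qed.

Lemma zseries_shift : zseries (fun l => a (l + 1)%Z) = zseries a.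
Proof.
  unfold zseries. rewrite zseries_nonneg_split.
  rewrite (Series_ext (fun n => a (Z.of_nat n + 1)%Z) (fun n => a (Z.of_nat (S n))))
    by (intros; f_equal; lia).
  rewrite (Series_ext (fun n => a (- Z.of_nat (S n) + 1)%Z) (fun n => a (- Z.of_nat n)%Z))
    by (intros; f_equal; lia).
  rewrite zseries_nonpos_split. ring.
Qed.

End ZSeries.

Definition tau (p : nat) : R := (-1) ^ (p + 1).

Definition beta (p : nat) (alpha : R) : R := alpha - INR (p + 1).

Definition central_term (p : nat) (alpha x : R) : R :=
  rabs_pow x alpha * sinc (x / 2) ^ (p + 1).

Lemma tau_sign (p : nat) : tau p = 1 \/ tau p = -1.
Proof.
  unfold tau. destruct (Nat.Even_or_Odd (p + 1)) as [[k ->] | [k ->]].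
  - left. apply pow_1_even.
  - right. rewrite Nat.add_1_r. apply pow_1_odd.
Qed.

Lemma beta_lt (p : nat) (alpha : R) : (2 <= p)%nat -> alpha < 2 -> beta p alpha < -1.
Proof. intros Hp Ha. unfold beta. rewrite plus_INR. apply le_INR in Hp. simpl in *. lra. Qed.

Lemma sin_add_nPI (y : R) (n : nat) : sin (y + INR n * PI) = (-1) ^ n * sin y.
Proof.
  induction n as [|n IH].
  - simpl. rewrite Rmult_0_l, Rplus_0_r. ring.
  - rewrite S_INR, Rmult_plus_distr_r, Rmult_1_l, <- Rplus_assoc, neg_sin, IH. simpl. ring.
Qed.

Lemma sign_pow_comm (p n : nat) : ((-1) ^ n) ^ (p + 1) = tau p ^ n.
Proof. unfold tau. rewrite <- !pow_mult, Nat.mul_comm. reflexivity. Qed.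

Lemma f_term_central (p : nat) (alpha theta : R) (l : Z) :
  f_term p alpha theta l = central_term p alpha (theta + 2 * IZR l * PI).
Proof. unfold f_term, central_term. do 3 f_equal. field. Qed.

Lemma central_term_even (p : nat) (alpha x : R) :
  central_term p alpha (- x) = central_term p alpha x.
Proof.
  unfold central_term, rabs_pow, sinc.
  destruct (Req_EM_T (- x) 0), (Req_EM_T x 0), (Req_EM_T (- x / 2) 0), (Req_EM_T (x / 2) 0);
    try lra.
  rewrite Rabs_Ropp. replace (- x / 2) with (- (x / 2)) by field. rewrite sin_neg.
  f_equal. f_equal. field. lra.
Qed.

Lemma central_term_pos (p : nat) (alpha x : R) : 0 < x ->
  central_term p alpha x = (2 * sin (x / 2)) ^ (p + 1) * Rpower x (beta p alpha).
Proof.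
  intros Hx. unfold central_term, rabs_pow, sinc, beta.
  destruct (Req_EM_T x 0), (Req_EM_T (x / 2) 0); try lra.
  rewrite Rabs_pos_eq by lra. unfold Rminus.
  rewrite Rpower_plus, Rpower_Ropp, Rpower_pow by lra.
  replace (sin (x / 2) / (x / 2)) with (2 * sin (x / 2) / x) by (field; lra).
  unfold Rdiv. rewrite Rpow_mult_distr, pow_inv. ring.
Qed.

Lemma central_term_bound (p : nat) (alpha x : R) : x <> 0 ->
  Rabs (central_term p alpha x) <= 2 ^ (p + 1) * Rpower (Rabs x) (beta p alpha).
Proof.
  intros Hx.
  replace (central_term p alpha x) with (central_term p alpha (Rabs x))
    by (destruct (Rcase_abs x); [rewrite Rabs_left, central_term_even | rewrite Rabs_right]; auto).
  rewrite central_term_pos by (apply Rabs_pos_lt, Hx).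
  rewrite Rabs_mult, (Rabs_pos_eq (Rpower _ _)) by (left; apply Rpower_gt_0).
  apply Rmult_le_compat_r; [left; apply Rpower_gt_0|].
  rewrite <- RPow_abs. apply pow_incr. split; [apply Rabs_pos|].
  rewrite Rabs_mult, Rabs_pos_eq by lra. pose proof (SIN_bound (Rabs x / 2)).
  assert (Rabs (sin (Rabs x / 2)) <= 1) by (apply Rabs_le; lra). lra.
Qed.

Lemma f_term_nonneg_index (p : nat) (alpha theta : R) (n : nat) : 0 < theta + 2 * INR n * PI ->
  f_term p alpha theta (Z.of_nat n) =
  (2 * sin (theta / 2)) ^ (p + 1) * (tau p ^ n * Rpower (theta + 2 * INR n * PI) (beta p alpha)).
Proof.
  intros H. rewrite f_term_central, <- INR_IZR_INZ, central_term_pos by exact H.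
  replace ((theta + 2 * INR n * PI) / 2) with (theta / 2 + INR n * PI) by field.
  rewrite sin_add_nPI, <- sign_pow_comm.
  replace (2 * ((-1) ^ n * sin (theta / 2))) with ((-1) ^ n * (2 * sin (theta / 2))) by ring.
  rewrite Rpow_mult_distr. ring.
Qed.

Lemma f_term_neg_index (p : nat) (alpha theta : R) (n : nat) : theta < 2 * INR (S n) * PI ->
  f_term p alpha theta (- Z.of_nat (S n)) =
  (2 * sin (theta / 2)) ^ (p + 1) *
  (tau p ^ n * Rpower (2 * PI - theta + 2 * INR n * PI) (beta p alpha)).
Proof.
  intros H. rewrite f_term_central, opp_IZR, <- INR_IZR_INZ.
  replace (theta + 2 * - INR (S n) * PI) with (- (2 * PI - theta + 2 * INR n * PI))
    by (rewrite S_INR; ring).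
  rewrite central_term_even, central_term_pos by (rewrite S_INR in H; lra).
  replace ((2 * PI - theta + 2 * INR n * PI) / 2) with (- (theta / 2) + INR (S n) * PI)
    by (rewrite S_INR; field).
  rewrite sin_add_nPI, sin_neg, <- sign_pow_comm.
  replace (2 * ((-1) ^ S n * - sin (theta / 2))) with ((-1) ^ n * (2 * sin (theta / 2)))
    by (simpl; ring).
  rewrite Rpow_mult_distr. ring.
Qed.

Lemma Rabs_sin_le (y : R) : Rabs (sin y) <= Rabs y.
Proof.
  assert (Hpos : forall z, 0 <= z -> Rabs (sin z) <= z).
  { intros z Hz. pose proof (SIN_bound z). pose proof PI_gt_3.
    destruct (Rle_lt_dec 1 z); [apply Rabs_le; lra|].
    destruct (Req_dec z 0) as [-> | Hz0]; [rewrite sin_0, Rabs_R0; lra|].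
    pose proof (sin_lt_x z ltac:(lra)). pose proof (sin_ge_0 z Hz ltac:(lra)).
    rewrite Rabs_pos_eq; lra. }
  destruct (Rle_lt_dec 0 y).
  - rewrite (Rabs_pos_eq y) by lra. apply Hpos. lra.
  - rewrite <- (Ropp_involutive y), sin_neg, !Rabs_Ropp, (Rabs_left y) by lra. apply Hpos. lra.
Qed.

Lemma Rabs_sinc_le_1 (y : R) : Rabs (sinc y) <= 1.
Proof.
  unfold sinc. destruct (Req_EM_T y 0); [rewrite Rabs_R1; lra|].
  assert (0 < Rabs y) by (apply Rabs_pos_lt; assumption).
  unfold Rdiv. rewrite Rabs_mult, Rabs_inv.
  apply (Rmult_le_reg_r (Rabs y)); [assumption|].
  rewrite Rmult_assoc, Rinv_l, Rmult_1_r, Rmult_1_l by lra. apply Rabs_sin_le.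
Qed.

Section Fpa.
Variables (p : nat) (alpha : R).
Hypothesis Hp : (2 <= p)%nat.
Hypothesis Halpha : 1 < alpha < 2.

Lemma f_pa_zseries (theta : R) : f_pa p alpha theta = zseries (f_term p alpha theta).
Proof. reflexivity. Qed.

Let W := lattice_sum (beta p alpha) (tau p).

Lemma f_term_far (theta : R) (N k : nat) (m : Z) : Rabs theta <= INR N ->
  INR (N + k) + 1 <= Rabs (IZR m) ->
  Rabs (f_term p alpha theta m) <= 2 ^ (p + 1) * Rpower (INR k + 1) (beta p alpha).
Proof.
  intros HN Hm. pose proof PI_gt_3. pose proof (beta_lt p alpha Hp ltac:(lra)).
  rewrite plus_INR in Hm. pose proof (pos_INR k).
  assert (Hfar : INR k + 1 <= Rabs (theta + 2 * IZR m * PI)).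
  { pose proof (Rabs_triang (theta + 2 * IZR m * PI) (- theta)) as T.
    rewrite Rabs_Ropp in T.
    replace (theta + 2 * IZR m * PI + - theta) with (2 * PI * IZR m) in T by ring.
    rewrite Rabs_mult, (Rabs_pos_eq (2 * PI)) in T by lra.
    pose proof (pos_INR N). assert (2 * PI * Rabs (IZR m) >= 6 * (INR N + INR k + 1)) by nra.
    lra. }
  rewrite f_term_central. eapply Rle_trans; [apply central_term_bound|].
  - intros E. rewrite E, Rabs_R0 in Hfar. lra.
  - apply Rmult_le_compat_l; [apply pow_le; lra|]. apply Rpower_antitone; lra.
Qed.

Lemma ex_zseries_f_term (theta : R) : ex_zseries (f_term p alpha theta).
Proof.
  destruct (INR_unbounded (Rabs theta)) as [N HN].
  assert (Hdom : ex_series (fun k => 2 ^ (p + 1) * Rpower (INR k + 1) (beta p alpha))).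
  { apply (@ex_series_scal_l R_AbsRing R_NormedModule), ex_series_Rpower, beta_lt;
      [exact Hp | lra]. }
  split.
  - apply (ex_series_incr_n _ (S N)). refine (ex_series_dominated _ _ _ Hdom).
    intros k. apply (f_term_far theta N k); [lra|].
    rewrite <- INR_IZR_INZ, Rabs_pos_eq by apply pos_INR. rewrite <- S_INR. apply Rle_refl.
  - apply (ex_series_incr_n _ N). refine (ex_series_dominated _ _ _ Hdom).
    intros k. apply (f_term_far theta N k); [lra|].
    rewrite opp_IZR, Rabs_Ropp, <- INR_IZR_INZ, Rabs_pos_eq by apply pos_INR.
    rewrite S_INR. lra.
Qed.

Lemma f_pa_even (theta : R) : f_pa p alpha theta = f_pa p alpha (- theta).
Proof.
  rewrite !f_pa_zseries.
  rewrite (zseries_ext (f_term p alpha (- theta)) (fun l => f_term p alpha theta (- l))).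
  - symmetry. apply zseries_reflect, ex_zseries_f_term.
  - intros l. rewrite !f_term_central, opp_IZR, <- central_term_even. f_equal. ring.
Qed.

Lemma f_pa_periodic (theta : R) : f_pa p alpha (theta + 2 * PI) = f_pa p alpha theta.
Proof.
  rewrite !f_pa_zseries.
  rewrite (zseries_ext (f_term p alpha (theta + 2 * PI)) (fun l => f_term p alpha theta (l + 1))).
  - apply zseries_shift, ex_zseries_f_term.
  - intros l. rewrite !f_term_central, plus_IZR. f_equal. ring.
Qed.

Lemma f_pa_shift (theta : R) (k : Z) : f_pa p alpha (theta + 2 * IZR k * PI) = f_pa p alpha theta.
Proof.
  assert (Hnat : forall (t : R) (n : nat), f_pa p alpha (t + 2 * INR n * PI) = f_pa p alpha t).
  { intros t n. induction n as [|n IH].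
    - simpl. f_equal. ring.
    - rewrite S_INR, <- IH, <- (f_pa_periodic (t + 2 * INR n * PI)). f_equal. ring. }
  destruct (Z.le_gt_cases 0 k) as [Hk | Hk].
  - destruct (IZN k Hk) as [n ->]. rewrite <- INR_IZR_INZ. apply Hnat.
  - destruct (IZN (- k) ltac:(lia)) as [n Hn].
    rewrite <- (Hnat _ n). f_equal.
    rewrite INR_IZR_INZ, <- Hn, opp_IZR. ring.
Qed.

(* By periodicity and symmetry every value of [f^{p,alpha}] is taken on [[0, pi]]. *)
Lemma f_pa_reduce (theta : R) : exists t, 0 <= t <= PI /\ f_pa p alpha theta = f_pa p alpha t.
Proof.
  pose proof PI_gt_3.
  set (k := (up ((theta + PI) / (2 * PI)) - 1)%Z).
  assert (Hk : IZR k <= (theta + PI) / (2 * PI) < IZR k + 1).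
  { destruct (archimed ((theta + PI) / (2 * PI))). unfold k. rewrite minus_IZR. lra. }
  assert (Hrange : - PI <= theta - 2 * IZR k * PI < PI).
  { destruct Hk as [Hlo Hhi].
    apply (Rmult_le_compat_r (2 * PI)) in Hlo; [|lra].
    apply (Rmult_lt_compat_r (2 * PI)) in Hhi; [|lra].
    replace ((theta + PI) / (2 * PI) * (2 * PI)) with (theta + PI) in Hlo, Hhi by (field; lra).
    lra. }
  assert (Hshift : f_pa p alpha theta = f_pa p alpha (theta - 2 * IZR k * PI)).
  { rewrite <- (f_pa_shift (theta - 2 * IZR k * PI) k). f_equal. ring. }
  destruct (Rle_lt_dec 0 (theta - 2 * IZR k * PI)).
  - eexists. split; [|exact Hshift]. lra.
  - exists (- (theta - 2 * IZR k * PI)). split; [lra|]. rewrite Hshift. apply f_pa_even.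
Qed.

Lemma f_pa_near_zero (theta : R) : Rabs theta < 2 * PI ->
  f_pa p alpha theta = central_term p alpha theta +
    (2 * sin (theta / 2)) ^ (p + 1) * (tau p * W (2 * PI + theta) + W (2 * PI - theta)).
Proof.
  intros Hth. apply Rabs_def2 in Hth.
  rewrite f_pa_zseries. unfold zseries, W, lattice_sum.
  rewrite zseries_nonneg_split by apply ex_zseries_f_term.
  rewrite (Series_ext (fun n => f_term p alpha theta (Z.of_nat (S n)))
             (fun n => (2 * sin (theta / 2)) ^ (p + 1) * tau p *
                (tau p ^ n * Rpower (2 * PI + theta + 2 * INR n * PI) (beta p alpha)))).
  2: { intros n. pose proof (pos_INR n).
       rewrite f_term_nonneg_index by (rewrite S_INR; nra).
       rewrite S_INR. simpl pow.
       replace (theta + 2 * (INR n + 1) * PI) with (2 * PI + theta + 2 * INR n * PI) by ring.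
       ring. }
  rewrite (Series_ext (fun n => f_term p alpha theta (- Z.of_nat (S n))%Z)
             (fun n => (2 * sin (theta / 2)) ^ (p + 1) *
                (tau p ^ n * Rpower (2 * PI - theta + 2 * INR n * PI) (beta p alpha)))).
  2: { intros n. pose proof (pos_INR n). apply f_term_neg_index. rewrite S_INR. nra. }
  rewrite !Series_scal_l, f_term_central. simpl IZR.
  replace (theta + 2 * 0 * PI) with theta by ring. ring.
Qed.

Lemma f_pa_interior (theta : R) : 0 < theta < 2 * PI ->
  f_pa p alpha theta = (2 * sin (theta / 2)) ^ (p + 1) * (W theta + W (2 * PI - theta)).
Proof.
  intros Hth. pose proof PI_gt_3.
  rewrite f_pa_zseries. unfold zseries, W, lattice_sum.
  rewrite Rmult_plus_distr_l, <- !Series_scal_l. f_equal; apply Series_ext; intros n;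
    pose proof (pos_INR n).
  - apply f_term_nonneg_index. nra.
  - apply f_term_neg_index. rewrite S_INR. nra.
Qed.

(* For [alpha >= 1] the central term vanishes at least linearly at [0]. *)
Lemma central_term_small (x : R) : Rabs x <= 1 -> Rabs (central_term p alpha x) <= Rabs x.
Proof.
  intros Hx. unfold central_term. rewrite Rabs_mult, <- RPow_abs.
  assert (Hsinc : Rabs (sinc (x / 2)) ^ (p + 1) <= 1).
  { rewrite <- (pow1 (p + 1)). apply pow_incr. split; [apply Rabs_pos | apply Rabs_sinc_le_1]. }
  assert (Hpow : Rabs (rabs_pow x alpha) <= Rabs x).
  { unfold rabs_pow. destruct (Req_EM_T x 0) as [-> | Hx0]; [rewrite Rabs_R0; lra|].
    assert (0 < Rabs x) by (apply Rabs_pos_lt; assumption).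
    rewrite Rabs_pos_eq by (left; apply Rpower_gt_0).
    replace alpha with (1 + (alpha - 1)) by ring. rewrite Rpower_plus, Rpower_1 by assumption.
    assert (Hle1 : Rpower (Rabs x) (alpha - 1) <= Rpower 1 (alpha - 1))
      by (apply Rle_Rpower_l; lra).
    unfold Rpower at 2 in Hle1. rewrite ln_1, Rmult_0_r, exp_0 in Hle1.
    pose proof (Rpower_gt_0 (Rabs x) (alpha - 1)). nra. }
  pose proof (Rabs_pos (rabs_pow x alpha)). pose proof (pow_le _ (p + 1) (Rabs_pos (sinc (x / 2)))).
  nra.
Qed.

Lemma central_term_continuous (c : R) : 0 <= c -> continuity_pt (central_term p alpha) c.
Proof.
  intros [Hc | <-].
  - (* away from [0] the central term is [(2 sin(x/2))^(p+1) x^beta], which is smooth *)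
    apply continuity_pt_filterlim.
    apply (continuous_ext_loc _ (fun x => (2 * sin (x / 2)) ^ (p + 1) * Rpower x (beta p alpha))).
    + exists (mkposreal _ Hc). intros y Hy. simpl in Hy. unfold ball in Hy. simpl in Hy.
      unfold AbsRing_ball, abs, minus, plus, opp in Hy. simpl in Hy. apply Rabs_def2 in Hy.
      symmetry. apply central_term_pos. lra.
    + apply (@ex_derive_continuous R_AbsRing R_NormedModule). unfold Rpower. auto_derive. lra.
  - (* at [0] use [|central_term x| <= |x|] *)
    assert (Hzero : central_term p alpha 0 = 0).
    { unfold central_term, rabs_pow. destruct (Req_EM_T 0 0); [ring | lra]. }
    intros eps Heps. exists (Rmin 1 eps). split; [apply Rmin_pos; lra|].
    intros x [_ Hx]. simpl in *. unfold R_dist in *. rewrite Hzero, Rminus_0_r in *.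
    pose proof (Rmin_l 1 eps). pose proof (Rmin_r 1 eps).
    pose proof (central_term_small x ltac:(lra)). lra.
Qed.

Lemma central_term_pos_lt (x : R) : 0 < x < 2 * PI -> 0 < central_term p alpha x.
Proof.
  intros Hx. rewrite central_term_pos by lra.
  apply Rmult_lt_0_compat; [|apply Rpower_gt_0].
  apply pow_lt. assert (0 < sin (x / 2)) by (apply sin_gt_0; lra). lra.
Qed.

(* The tail [f - central_term] divided by [(2 sin(theta/2))^(p+1)]. *)
Let tail (theta : R) : R := tau p * W (2 * PI + theta) + W (2 * PI - theta).

Let zeta : R := Series (fun n => Rpower (INR n + 1) (beta p alpha)).

Lemma tail_bounds (theta : R) : 0 <= theta <= PI -> 0 <= tail theta <= 2 * zeta.
Proof.
  intros Hth. pose proof PI_gt_3.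
  pose proof (beta_lt p alpha Hp ltac:(lra)) as Hbeta.
  split; [apply lattice_tail_nonneg; auto using tau_sign|].
  pose proof (lattice_sum_bound _ _ Hbeta (tau_sign p) (2 * PI + theta) ltac:(lra)) as Hplus.
  pose proof (lattice_sum_bound _ _ Hbeta (tau_sign p) (2 * PI - theta) ltac:(lra)) as Hminus.
  unfold tail, W. eapply Rle_trans; [apply Rle_abs|].
  eapply Rle_trans; [apply Rabs_triang|].
  rewrite Rabs_mult. replace (Rabs (tau p)) with 1
    by (destruct (tau_sign p) as [-> | ->]; [rewrite Rabs_R1 | rewrite Rabs_left by lra]; ring).
  fold zeta in Hplus, Hminus. lra.
Qed.

Lemma f_pa_bounds : exists C : R, forall theta : R, 0 <= theta <= PI ->
  rabs_pow theta alpha * (sinc (theta / 2)) ^ (p + 1) <= f_pa p alpha theta /\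
  f_pa p alpha theta <=
    rabs_pow theta alpha * (sinc (theta / 2)) ^ (p + 1) + C * (sin (theta / 2)) ^ (p + 1).
Proof.
  exists (2 ^ (p + 1) * (2 * zeta)). intros theta Hth. pose proof PI_gt_3.
  rewrite f_pa_near_zero by (rewrite Rabs_pos_eq; lra). fold (tail theta).
  change (rabs_pow theta alpha * sinc (theta / 2) ^ (p + 1)) with (central_term p alpha theta).
  destruct (tail_bounds theta Hth) as [Htail_lo Htail_hi].
  rewrite Rpow_mult_distr.
  assert (Hfactor : 0 <= 2 ^ (p + 1) * sin (theta / 2) ^ (p + 1))
    by (apply Rmult_le_pos; apply pow_le; [lra | apply sin_ge_0; lra]).
  pose proof (Rmult_le_pos _ _ Hfactor Htail_lo).
  pose proof (Rmult_le_compat_l _ _ _ Hfactor Htail_hi).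
  split; lra.
Qed.

Lemma f_pa_pos (theta : R) : 0 < theta <= PI -> 0 < f_pa p alpha theta.
Proof.
  intros Hth. pose proof PI_gt_3. destruct f_pa_bounds as [C HC].
  destruct (HC theta ltac:(lra)) as [Hlow _].
  pose proof (central_term_pos_lt theta ltac:(lra)). unfold central_term in *. lra.
Qed.

Lemma near_zero_form_continuous (c : R) : 0 <= c <= PI ->
  continuity_pt
    (fun theta => central_term p alpha theta + (2 * sin (theta / 2)) ^ (p + 1) * tail theta) c.
Proof.
  intros Hc. pose proof PI_gt_3. pose proof (beta_lt p alpha Hp ltac:(lra)) as Hbeta.
  assert (Hshift : forall s : R, 1 < s + c -> continuity_pt (fun theta => W (s + theta)) c).
  { intros s Hs. apply (continuity_pt_comp (fun theta => s + theta) W).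
    - apply continuity_pt_ex_derive. auto_derive. exact I.
    - apply lattice_sum_continuous; auto using tau_sign. }
  assert (Hreflect : continuity_pt (fun theta => W (2 * PI - theta)) c).
  { apply (continuity_pt_comp (fun theta => 2 * PI - theta) W).
    - apply continuity_pt_ex_derive. auto_derive. exact I.
    - apply lattice_sum_continuous; auto using tau_sign. lra. }
  apply continuity_pt_plus; [apply central_term_continuous; lra|].
  apply continuity_pt_mult; [apply continuity_pt_ex_derive; auto_derive; exact I|].
  apply continuity_pt_plus; [|exact Hreflect].
  apply continuity_pt_mult; [apply continuity_pt_const; intros ? ?; reflexivity|].
  apply Hshift. lra.
Qed.

Lemma f_pa_attains_max : exists theta0, forall theta, f_pa p alpha theta <= f_pa p alpha theta0.
Proof.
  pose proof PI_gt_3.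
  destruct (continuity_ab_maj _ 0 PI ltac:(lra) near_zero_form_continuous) as [t0 [Hmax Ht0]].
  exists t0. intros theta. destruct (f_pa_reduce theta) as [t [Ht ->]].
  rewrite !f_pa_near_zero by (rewrite Rabs_pos_eq; lra). apply Hmax, Ht.
Qed.

End Fpa.

(** * The ratio [f(pi) / f(pi/2)] *)

Lemma two_sin_PI4 : 2 * sin (PI / 4) = Rpower 2 (/ 2).
Proof.
  rewrite sin_PI4, Rpower_sqrt by lra.
  assert (Hsqrt : 0 < sqrt 2) by (apply sqrt_lt_R0; lra).
  pose proof (sqrt_sqrt 2 ltac:(lra)) as Hsq.
  apply (Rmult_eq_reg_r (sqrt 2)); [|lra].
  field_simplify; [lra | lra].
Qed.

(* The powers of [2] in [f(pi)] and [f(pi/2)] match the claimed constant: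
   [2^((2 alpha + 1 - p)/2) * 2^((p+1)/2) = 2^(alpha + 1) = 2^(p+2) * 2^beta]. *)
Lemma ratio_constant (p : nat) (alpha : R) :
  Rpower 2 ((2 * alpha + 1 - INR p) / 2) * (2 * sin (PI / 4)) ^ (p + 1) =
  2 ^ (p + 1) * 2 * Rpower 2 (beta p alpha).
Proof.
  rewrite two_sin_PI4, <- Rpower_pow, Rpower_mult by apply Rpower_gt_0.
  replace (2 ^ (p + 1) * 2) with (2 ^ (p + 2)) by (rewrite !pow_add; simpl; ring).
  rewrite <- Rpower_pow, <- !Rpower_plus by lra.
  f_equal. unfold beta. rewrite !plus_INR. simpl. field.
Qed.

Lemma f_pa_ratio (p : nat) (alpha : R) : (2 <= p)%nat -> alpha < 2 ->
  f_pa p alpha PI <= Rpower 2 ((2 * alpha + 1 - INR p) / 2) * f_pa p alpha (PI / 2).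
Proof.
  intros Hp Halpha. pose proof PI_gt_3.
  rewrite (f_pa_interior p alpha PI), (f_pa_interior p alpha (PI / 2)) by lra.
  replace (PI / 2 / 2) with (PI / 4) by field.
  rewrite sin_PI2, <- Rmult_assoc, ratio_constant.
  replace (2 * PI - PI) with PI by ring. replace (2 * PI - PI / 2) with (3 * PI / 2) by field.
  replace (2 * 1) with 2 by ring.
  rewrite !Rmult_assoc. apply Rmult_le_compat_l; [apply pow_le; lra|].
  replace (lattice_sum (beta p alpha) (tau p) PI + lattice_sum (beta p alpha) (tau p) PI)
    with (2 * lattice_sum (beta p alpha) (tau p) PI) by ring.
  apply Rmult_le_compat_l; [lra|].
  apply lattice_sum_half_period; [apply beta_lt; assumption | apply tau_sign].
Qed.

Theorem theorem5p2 (alpha : R) (p : nat) :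
  1 < alpha < 2 -> (2 <= p)%nat ->
  (forall theta : R, f_pa p alpha theta = f_pa p alpha (- theta)) /\
  (exists C : R, forall theta : R, 0 <= theta <= PI ->
     rabs_pow theta alpha * (sinc (theta / 2)) ^ (p + 1) <= f_pa p alpha theta /\
     f_pa p alpha theta <=
       rabs_pow theta alpha * (sinc (theta / 2)) ^ (p + 1)
       + C * (sin (theta / 2)) ^ (p + 1)) /\
  (exists M : R,
     (forall theta : R, f_pa p alpha theta <= M) /\
     (exists theta0 : R, f_pa p alpha theta0 = M) /\
     f_pa p alpha PI / M <= f_pa p alpha PI / f_pa p alpha (PI / 2) /\
     f_pa p alpha PI / f_pa p alpha (PI / 2)
       <= Rpower 2 ((2 * alpha + 1 - INR p) / 2)).
Proof.
  intros Halpha Hp. pose proof PI_gt_3.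
  split; [exact (f_pa_even p alpha Hp Halpha)|].
  split; [exact (f_pa_bounds p alpha Hp Halpha)|].
  destruct (f_pa_attains_max p alpha Hp Halpha) as [theta0 Hmax].
  pose proof (f_pa_pos p alpha Hp Halpha PI ltac:(lra)) as Hpi.
  pose proof (f_pa_pos p alpha Hp Halpha (PI / 2) ltac:(lra)) as Hhalf.
  exists (f_pa p alpha theta0). split; [exact Hmax|]. split; [exists theta0; reflexivity|].
  split.
  -
    unfold Rdiv. apply Rmult_le_compat_l; [lra|]. apply Rinv_le_contravar; [lra | apply Hmax].
  - pose proof (f_pa_ratio p alpha Hp ltac:(lra)).
    apply (Rmult_le_reg_r (f_pa p alpha (PI / 2))); [lra|].
    unfold Rdiv. rewrite Rmult_assoc, Rinv_l by lra. lra.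
Qed.
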